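(* Let $\mu$ be a valuated matroid on $[n]$ and let $A\in K^{n\times n}$ be a weakly monomial matrix. Then $\mathrm{val}(A)\odot\overline{\operatorname{trop}}(\mu)\subseteq\mathbb{P}(\mathbb{T}^n)$ is a tropical linear space.
   Context: $K$ is a field with non-Archimedean valuation $\mathrm{val}:K\to\mathbb{T}=\mathbb{R}\cup\{\infty\}$; $\mathbb{P}(\mathbb{T}^n)=(\mathbb{T}^n\setminus\{(\infty,\dots,\infty)\})/\mathbb{R}\mathbf{1}$; $(\mathrm{val}(A)\odot v)_i=\min_j(\mathrm{val}(A_{ij})+v_j)$, applied pointwise to sets. A matrix is weakly monomial if each row has at most one nonzero entry. Valuated matroid of rank $r$ on $[n]$: $\nu:\binom{[n]}{r}\to\mathbb{T}$, not identically $\infty$, such that for all $I,J$, $i\in I\setminus J$ there is $j\in J\setminus I$ with $\nu(I)+\nu(J)\ge\nu((I\setminus i)\cup j)+\nu((J\setminus j)\cup i)$. A tropical linear space is a set of the form $\overline{\operatorname{trop}}(\nu)$: the set of $x\in\mathbb{P}(\mathbb{T}^n)$ such that for each $I\in\binom{[n]}{r+1}$ with $C_\nu(I)\neq(\infty,\dots)$, where $C_\nu(I)_i=\nu(I\setminus i)$ for $i\in I$ and $\infty$ else, $\min_i(C_\nu(I)_i+x_i)$ is attained at least twice ($\infty$ counts as twice). *)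

From HB Require Import structures.
From mathcomp Require Import all_boot all_order all_algebra.
From mathcomp Require Import reals.
Set Implicit Arguments. Unset Strict Implicit. Unset Printing Implicit Defensive.
Import Order.TTheory GRing.Theory Num.Theory.
Local Open Scope ring_scope.

(* The tropical semiring T = R ∪ {∞}; [None] stands for ∞. *)
Definition trop (R : realType) := option R.

Section Trop.
Variable R : realType.

(* tropical "multiplication" = ordinary addition, ∞ absorbing *)
Definition tadd (a b : trop R) : trop R :=
  match a, b with Some x, Some y => Some (x + y) | _, _ => None end.

Definition tmin (a b : trop R) : trop R :=
  match a, b with
  | None, _ => b
  | _, None => a
  | Some x, Some y => Some (Num.min x y)
  end.

Definition tle (a b : trop R) : Prop :=
  match a, b with
  | _, None => True
  | None, Some _ => False
  | Some x, Some y => x <= y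
  end.

(* a vector of T^n different from (∞,...,∞), i.e. a representative of a
   point of P(T^n) *)
Definition tnonzero n (x : 'I_n -> trop R) : Prop := exists i, x i <> None.

(* two representatives define the same point of P(T^n) = (T^n \ {∞})/R1 *)
Definition proj_eq n (x y : 'I_n -> trop R) : Prop :=
  exists c : R, forall i, x i = tadd (Some c) (y i).

Definition nonarch_valuation (K : fieldType) (val : K -> trop R) : Prop :=
  [/\ forall a, val a = None <-> a = 0,
      forall a b, val (a * b) = tadd (val a) (val b)
    & forall a b, tle (tmin (val a) (val b)) (val (a + b))].

(* valuated matroid of rank r on [n]; nu is only relevant on r-subsets *)
Definition valuated_matroid n (r : nat) (nu : {set 'I_n} -> trop R) : Prop :=
  (exists I : {set 'I_n}, #|I| = r /\ nu I <> None) /\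
  forall I J : {set 'I_n}, #|I| = r -> #|J| = r ->
    forall i, i \in I :\: J ->
      exists2 j, j \in J :\: I &
        tle (tadd (nu ((I :\ i) :|: [set j])) (nu ((J :\ j) :|: [set i])))
            (tadd (nu I) (nu J)).

Definition circuit_vec n (nu : {set 'I_n} -> trop R) (I : {set 'I_n})
  : 'I_n -> trop R :=
  fun i => if i \in I then nu (I :\ i) else None.

(* min_i v_i is attained at least twice (∞ counts as twice) *)
Definition min_twice n (v : 'I_n -> trop R) : Prop :=
  forall i, v i <> None -> (forall j, tle (v i) (v j)) ->
    exists2 j, j != i & v j = v i.

(* closure of trop(nu), as a set of representatives in T^n \ {∞} *)
Definition trop_closure n (r : nat) (nu : {set 'I_n} -> trop R)
  (x : 'I_n -> trop R) : Prop :=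
  tnonzero x /\
  forall I : {set 'I_n}, #|I| = r.+1 ->
    (exists i, circuit_vec nu I i <> None) ->
    min_twice (fun i => tadd (circuit_vec nu I i) (x i)).

(* a subset of P(T^n), given by a predicate on nonzero representatives,
   is a tropical linear space *)
Definition tropical_linear_space n (S : ('I_n -> trop R) -> Prop) : Prop :=
  exists (r : nat) (nu : {set 'I_n} -> trop R),
    valuated_matroid r nu /\
    forall x, tnonzero x -> (S x <-> trop_closure r nu x).

Definition trop_mxv (K : fieldType) (val : K -> trop R) n (A : 'M[K]_n)
  (v : 'I_n -> trop R) : 'I_n -> trop R :=
  fun i => \big[tmin/None]_(j < n) tadd (val (A i j)) (v j).

Definition trop_image (K : fieldType) (val : K -> trop R) n (A : 'M[K]_n)
  (S : ('I_n -> trop R) -> Prop) : ('I_n -> trop R) -> Prop :=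
  fun y => tnonzero y /\ exists x, S x /\ proj_eq y (trop_mxv val A x).

End Trop.

Definition weakly_monomial (K : fieldType) n (A : 'M[K]_n) : Prop :=
  forall i j k, A i j != 0 -> A i k != 0 -> j = k.

(* A weakly monomial matrix [A] acts on [T^n] by [y i = a i + x (sg i)] for
   [i] in the set [D] of nonzero rows, where [A i (sg i)] is the nonzero entry
   of row [i] and [a i] its valuation, and by [y i = None] off [D].  This
   action forgets the coordinates outside [sg @: D], then copies coordinate
   [sg i] to every row of its fibre, shifted by [a i].  Forgetting a
   coordinate [j] maps [trop mu] onto the tropical linear space of the
   deletion of [j] (of the contraction, if [j] is a coloop), and the copying
   step maps [trop mu1] onto that of [pullback mu1 D sg a], which is
   [sum_(i in B) a i + mu1 (sg @: B)] on the sets [B] on which [sg] is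
   injective.
   The delicate point is lifting a point [z] of the deletion back to
   [trop mu], i.e. choosing its coordinate at [j].  It rests on the criterion
   that [x] lies in [trop mu] as soon as every finite coordinate of [x] lies
   in a basis minimising [mu B - sum_(i in B) x i]; comparing the best bases
   avoiding and containing [j] dictates the value at [j]. *)

From HB Require Import structures.
From mathcomp Require Import all_boot all_order all_algebra.
From mathcomp Require Import reals.
From mathcomp Require Import zify lra.
Set Implicit Arguments. Unset Strict Implicit. Unset Printing Implicit Defensive.
Import Order.TTheory GRing.Theory Num.Theory.
Local Open Scope ring_scope.

Section TropicalArithmetic.
Variable R : realType.
Local Notation T := (trop R).

Lemma tle_None (a : T) : tle a None.
Proof. by case: a. Qed.

Lemma tadd_None_r (a : T) : tadd a None = None.
Proof. by case: a. Qed.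

Lemma tle_refl (a : T) : tle a a.
Proof. by case: a => //= x; exact: lexx. Qed.

Lemma tle_total (a b : T) : tle a b \/ tle b a.
Proof. by case: a => [x|]; case: b => [y|] /=; auto; case/orP: (le_total x y); auto. Qed.

Lemma tadd0 (a : T) : tadd (Some 0) a = a.
Proof. by case: a => //= x; rewrite add0r. Qed.

Lemma taddA_Some (u v : R) (a : T) :
  tadd (Some u) (tadd (Some v) a) = tadd (Some (u + v)) a.
Proof. by case: a => //= x; rewrite addrA. Qed.

Lemma taddACA_Some (u v : R) (a b : T) :
  tadd (tadd (Some u) a) (tadd (Some v) b) = tadd (Some (u + v)) (tadd a b).
Proof. by case: a => [x|]; case: b => [y|] //=; rewrite addrACA. Qed.

Lemma tadd_Some_inj (c : R) : injective (tadd (Some c)).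
Proof. by case=> [x|] [y|] //= [/addrI ->]. Qed.

Lemma tle_tadd2l (c : R) (a b : T) :
  tle (tadd (Some c) a) (tadd (Some c) b) <-> tle a b.
Proof. by case: a => [x|]; case: b => [y|] //=; rewrite lerD2l. Qed.

Lemma tadd_Some_shift (u v u' v' : R) (a b : T) :
  tadd (Some u) a = tadd (Some v) b -> u' - v' = u - v ->
  tadd (Some u') a = tadd (Some v') b.
Proof. by case: a => [x|]; case: b => [y|] //= [e] e'; congr Some; lra. Qed.

Lemma eq_min_twice n (v w : 'I_n -> T) : v =1 w -> min_twice v -> min_twice w.
Proof.
move=> vw hv i wi wmin; have [||j ji vji] := hv i; rewrite ?vw //.
by move=> j; rewrite !vw.
by exists j => //; rewrite -!vw.
Qed.

Lemma eq_trop_closure n r (mu : {set 'I_n} -> T) (x y : 'I_n -> T) :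
  x =1 y -> trop_closure r mu x -> trop_closure r mu y.
Proof.
move=> xy [[i xi] hx]; split; first by exists i; rewrite -xy.
by move=> I hI hC; apply: (eq_min_twice _ (hx I hI hC)) => l; rewrite xy.
Qed.

End TropicalArithmetic.

Section Exchange.
Variable n : nat.
Implicit Types (A B : {set 'I_n}) (e k : 'I_n).

Lemma card_setU1 A k : k \notin A -> #|A :|: [set k]| = #|A|.+1.
Proof. by move=> kA; rewrite setUC cardsU1 kA. Qed.

Lemma card_setD1 A k : k \in A -> #|A| = #|A :\ k|.+1.
Proof. by move=> kA; rewrite (cardsD1 k A) kA. Qed.

Lemma setD1U1 A k : k \in A -> (A :\ k) :|: [set k] = A.
Proof. by move=> kA; rewrite setUC setD1K. Qed.

Lemma setU1D1 A k : k \notin A -> (A :|: [set k]) :\ k = A.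
Proof. by move=> kA; rewrite setUC setU1K. Qed.

Lemma setU1D1C A e k : e != k -> (A :|: [set k]) :\ e = (A :\ e) :|: [set k].
Proof.
move=> ek; apply/setP => i; rewrite !inE.
by case: (eqVneq i k) => [->|] /=; rewrite ?orbT ?andbT 1?eq_sym ?orbF.
Qed.

Lemma card_exchange B e k : e \in B -> k \notin B -> #|(B :\ e) :|: [set k]| = #|B|.
Proof.
by move=> eB kB; rewrite card_setU1 ?(card_setD1 eB) // !inE negb_and kB orbT.
Qed.

Lemma notin_exchange B e k j : j \notin B -> j != k -> j \notin (B :\ e) :|: [set k].
Proof. by move=> jB jk; rewrite !inE negb_or negb_and jB jk orbT. Qed.

Lemma exists_setD A B i : #|A| = #|B| -> i \in A :\: B -> exists j, j \in B :\: A.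
Proof.
move=> AB iA; have /card_gt0P [j] : (0 < #|B :\: A|)%N.
  by rewrite cardsD setIC -AB -cardsD; apply/card_gt0P; exists i.
by exists j.
Qed.

Lemma big_exchange (V : Type) (idx : V) (op : Monoid.com_law idx)
    (F : 'I_n -> V) B e k : e \in B -> k \notin B ->
  op (\big[op/idx]_(i in (B :\ e) :|: [set k]) F i) (F e) =
  op (\big[op/idx]_(i in B) F i) (F k).
Proof.
move=> eB kB; rewrite (bigD1 k) /=; last by rewrite !inE eqxx orbT.
rewrite [in RHS](bigD1 e) //= (@eq_bigl _ _ _ _ _ _ (fun i => (i \in B) && (i != e))).
  by rewrite (Monoid.mulmAC op (F k)) (Monoid.mulmAC op (F e)) (Monoid.mulmC op (F k)).
move=> i; rewrite !inE; case: (eqVneq i k) => [->|] /=; first by rewrite (negbTE kB) andbF.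
by rewrite orbF andbT andbC.
Qed.

Lemma sum_exchange (V : zmodType) (F : 'I_n -> V) B e k : e \in B -> k \notin B ->
  \sum_(i in (B :\ e) :|: [set k]) F i = \sum_(i in B) F i - F e + F k.
Proof.
by move=> eB kB; apply: (addIr (F e)); rewrite (big_exchange _ _ eB kB) addrAC subrK.
Qed.

End Exchange.

Section Reindexing.
Variables (R : realType) (n : nat).
Local Notation T := (trop R).
Implicit Types (B I : {set 'I_n}) (f : 'I_n -> 'I_n).

Lemma imsetD1 f B i : {in B &, injective f} -> i \in B ->
  f @: (B :\ i) = (f @: B) :\ f i.
Proof.
move=> f_inj iB; apply/setP => e; rewrite !inE.
apply/imsetP/andP => [[l + ->] | [ei /imsetP [l lB el]]]; last rewrite el in ei *.
  rewrite !inE => /andP [li lB]; split; last exact: imset_f.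
  by apply: contra li => /eqP fli; apply/eqP; exact: f_inj fli.
by exists l => //; rewrite !inE lB andbT; apply: contraNneq ei => ->.
Qed.

Lemma imset_setD1U1 f B i : i \in B -> f @: B = (f @: (B :\ i)) :|: [set f i].
Proof. by move=> iB; rewrite -{1}(setD1U1 iB) imsetU imset_set1. Qed.

Lemma min_twice_transfer (v w : 'I_n -> T) I f (c : R) :
  {in I &, injective f} -> (forall i, i \notin I -> v i = None) ->
  (forall e, e \notin f @: I -> w e = None) ->
  (forall i, i \in I -> v i = tadd (Some c) (w (f i))) ->
  min_twice v <-> min_twice w.
Proof.
move=> f_inj v_out w_out vw.
have inI i : v i <> None -> i \in I by apply: contra_notT => /v_out.
have in_fI e : w e <> None -> e \in f @: I by apply: contra_notT => /w_out.
split=> [hv _ /[dup] /in_fI /imsetP [i0 i0I ->] wi0 wmin | hw i0 vi0 vmin].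
  have vi0 : v i0 <> None by rewrite vw //; case: (w (f i0)) wi0.
  have [|l li0 vl] := hv i0 vi0.
    move=> l; case: (boolP (l \in I)) => lI; last by rewrite (v_out l lI); exact: tle_None.
    by rewrite !vw // tle_tadd2l.
  have lI : l \in I by apply: inI; rewrite vl.
  exists (f l); first by apply: contra li0 => /eqP fli; apply/eqP; exact: f_inj fli.
  by apply: (@tadd_Some_inj _ c); rewrite -!vw.
have i0I := inI _ vi0.
have wi0 : w (f i0) <> None by apply: contra_not vi0; rewrite vw // => ->.
have [|e ei0 we] := hw (f i0) wi0.
  move=> e; case: (boolP (e \in f @: I)) => [/imsetP [l lI ->] | eI].
    by rewrite -(tle_tadd2l c) -!vw.
  by rewrite (w_out e eI); exact: tle_None.
have /imsetP [l lI el] : e \in f @: I by apply: in_fI; rewrite we.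
exists l; first by apply: contraNneq ei0 => li0; rewrite el li0.
by rewrite !vw // -el we.
Qed.

End Reindexing.

Definition update (T : Type) n (z : 'I_n -> T) (j : 'I_n) (t : T) : 'I_n -> T :=
  fun i => if i == j then t else z i.

Lemma update_nonzero (R : realType) n (z : 'I_n -> trop R) j t :
  tnonzero z -> z j = None -> tnonzero (update z j t).
Proof.
move=> [i zi] zj; exists i; rewrite /update; case: eqVneq => // ij.
by move: zi; rewrite ij zj.
Qed.

Section OptimalBases.
Variables (R : realType) (n r : nat) (mu : {set 'I_n} -> trop R).
Local Notation T := (trop R).
Implicit Types (x : 'I_n -> T) (B I : {set 'I_n}) (P : pred {set 'I_n}).

Definition circuit_terms I x i := tadd (circuit_vec mu I i) (x i).

Definition is_basis B := (#|B| == r) && (mu B != None).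

Definition basis_off j := [pred B | is_basis B && (j \notin B)].

Definition basis_through j := [pred B | is_basis B && (j \in B)].

Definition min_twice_off j x := forall I, #|I| = r.+1 -> j \notin I ->
  (exists i, circuit_vec mu I i <> None) -> min_twice (circuit_terms I x).

Definition inf_count x B := (\sum_(i in B) (x i == None))%N.

Definition fin_sum x B := \sum_(i in B) odflt 0 (x i).

Definition weight x B := odflt 0 (mu B) - fin_sum x B.

(* [B] minimises [mu B - sum_(i in B) x i] over [P], an infinite [x i]
   counting as [-oo]: first maximise the number of infinite coordinates in
   [B], then minimise the finite part. *)
Definition optimal P x B := P B /\ forall B', P B' ->
  (inf_count x B' <= inf_count x B)%N /\
  (inf_count x B' = inf_count x B -> weight x B <= weight x B').

Lemma is_basisP B : is_basis B -> #|B| = r /\ exists b, mu B = Some b.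
Proof. by case/andP => /eqP ->; case: (mu B) => // b _; split => //; exists b. Qed.

Lemma inf_count_exchange x B e k : e \in B -> k \notin B ->
  (inf_count x ((B :\ e) :|: [set k]) + (x e == None) =
   inf_count x B + (x k == None))%N.
Proof. exact: big_exchange. Qed.

Lemma fin_sum_exchange x B e k : e \in B -> k \notin B ->
  fin_sum x ((B :\ e) :|: [set k]) = fin_sum x B - odflt 0 (x e) + odflt 0 (x k).
Proof. exact: sum_exchange. Qed.

Lemma inf_count_update x j t B : x j = None ->
  inf_count x B = (inf_count (update x j (Some t)) B + (j \in B))%N.
Proof.
move=> xj; rewrite /inf_count /update; case jB: (j \in B).
  rewrite (bigD1 j jB) [in RHS](bigD1 j jB) /= eqxx xj addn1 add1n; congr S.
  by apply: eq_bigr => i /andP [_ /negbTE ->].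
rewrite addn0; apply: eq_bigr => i iB.
by rewrite ifN //; apply: contraTneq iB => ->; rewrite jB.
Qed.

Lemma weight_update x j t B : x j = None ->
  weight (update x j (Some t)) B = weight x B - (if j \in B then t else 0).
Proof.
move=> xj; rewrite /weight /fin_sum /update -addrA -opprD; congr (_ - _).
case jB: (j \in B); last first.
  rewrite addr0; apply: eq_bigr => i iB.
  by rewrite ifN //; apply: contraTneq iB => ->; rewrite jB.
rewrite (bigD1 j jB) [in RHS](bigD1 j jB) /= eqxx xj add0r addrC; congr (_ + _).
by apply: eq_bigr => i /andP [_ /negbTE ->].
Qed.

Lemma optimal_tie P x B B' : optimal P x B -> P B' ->
  inf_count x B' = inf_count x B -> weight x B' <= weight x B -> optimal P x B'.
Proof.
move=> [_ optB] PB' cB' wB'; split => // B'' PB''.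
have [c'' w''] := optB _ PB''; rewrite cB'; split => // /w''; exact: le_trans.
Qed.

Lemma optimal_exists P x : (exists B, P B) -> exists B, optimal P x B.
Proof.
case=> B0 PB0; have [B1 PB1 maxB1] := arg_maxnP (inf_count x) PB0.
pose Q B := P B && (inf_count x B == inf_count x B1).
have QB1 : Q B1 by rewrite /Q PB1 eqxx.
have [B2 /andP [PB2 /eqP cB2] minB2] := arg_minP (weight x) QB1.
exists B2; split => // B' PB'; rewrite cB2; split; first exact: maxB1.
by move=> cB'; apply: minB2; rewrite /Q PB' cB' eqxx.
Qed.

End OptimalBases.

Section OptimalCover.
Variables (R : realType) (n r : nat) (mu : {set 'I_n} -> trop R).
Local Notation T := (trop R).
Local Notation circuit_terms := (circuit_terms mu).
Local Notation is_basis := (is_basis r mu).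
Local Notation basis_off := (basis_off r mu).
Local Notation optimal := (optimal mu).
Local Notation weight := (weight mu).
Implicit Types (x : 'I_n -> T) (B I : {set 'I_n}).

Lemma optimal_cover_min_twice x : valuated_matroid r mu ->
  (forall e, x e <> None -> exists B, optimal is_basis x B /\ e \in B) ->
  forall I, #|I| = r.+1 -> min_twice (circuit_terms I x).
Proof.
move=> [_ hex] cover I hI i0; rewrite /circuit_terms /circuit_vec.
case i0I: (i0 \in I) => /=; last by case.
case mu_i0: (mu (I :\ i0)) => [m|] /=; last by case.
case x_i0: (x i0) => [a|] /=; last by case.
move=> _ hmin.
have [B [[/andP [/eqP Br muB] optB] i0B]] :
    exists B, optimal is_basis x B /\ i0 \in B by apply: cover; rewrite x_i0.
case mu_B: (mu B) muB => [b|] // _.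
have Ir : #|I :\ i0| = r by move: hI; rewrite (card_setD1 i0I) => -[].
have i0BI : i0 \in B :\: (I :\ i0) by rewrite !inE eqxx i0B.
have [k] := hex B (I :\ i0) Br Ir i0 i0BI.
rewrite !inE => /andP [kB /andP [k_i0 kI]].
rewrite -(setU1D1C _ k_i0) setD1U1 // mu_i0 mu_B.
case mu_B': (mu ((B :\ i0) :|: [set k])) => [b'|] //.
case mu_k: (mu (I :\ k)) => [c|] //= hle.
have B'b : is_basis ((B :\ i0) :|: [set k]).
  by rewrite /is_basis card_exchange // Br eqxx mu_B'.
have [cnt_le w_le] := optB _ B'b.
have cnt_eq := inf_count_exchange x i0B kB; rewrite x_i0 /= addn0 in cnt_eq.
case x_k: (x k) cnt_eq => [d|] /= cnt_eq; last by move: cnt_le; rewrite cnt_eq addn1 ltnn.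
have := w_le (etrans cnt_eq (addn0 _)).
rewrite /weight mu_B mu_B' fin_sum_exchange // x_i0 x_k /= => hw.
have := hmin k; rewrite kI mu_k x_k /= => hmin_k.
by exists k; rewrite // kI mu_k x_k; congr Some; apply/eqP; rewrite eq_le; lra.
Qed.

Lemma optimal_off_extend j x B e l (a b c d : R) :
  optimal (basis_off j) x B -> e \notin B -> e != j -> x e = Some a ->
  mu B = Some b -> l \in B -> mu ((B :\ l) :|: [set e]) = Some c -> x l = Some d ->
  b + a <= c + d /\ (c + d = b + a -> optimal (basis_off j) x ((B :\ l) :|: [set e])).
Proof.
move=> optB eB ej xe muB lB muB' xl.
have [/andP [/andP [/eqP Br _] jB] _] := optB.
have B'off : basis_off j ((B :\ l) :|: [set e]).
  rewrite /= /is_basis card_exchange // Br eqxx muB' /=.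
  by rewrite !inE negb_or negb_and jB orbT eq_sym ej.
have cnt_eq := inf_count_exchange x lB eB; rewrite xl xe /= !addn0 in cnt_eq.
have w_eq : weight x ((B :\ l) :|: [set e]) = c - (fin_sum x B - d + a).
  by rewrite /weight muB' fin_sum_exchange // xl xe.
have := (optB.2 _ B'off).2 cnt_eq; rewrite w_eq /weight muB /= => hw.
split; first lra.
move=> cd; apply: (optimal_tie optB B'off cnt_eq).
by rewrite w_eq /weight muB /=; lra.
Qed.

Lemma optimal_off_cover j x B : min_twice_off r mu j x ->
  optimal (basis_off j) x B ->
  forall e, e != j -> x e <> None -> exists B', optimal (basis_off j) x B' /\ e \in B'.
Proof.
move=> hx optB e ej xe; case eB: (e \in B); first by exists B.
have [/andP [/andP [/eqP Br muB] jB] _] := optB.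
case mu_B: (mu B) muB => [b|] // _; case x_e: (x e) xe => [a|] // _.
pose I := B :|: [set e].
have IB : I :\ e = B by rewrite setU1D1 ?eB.
have Ilt l : l \in I -> l != e -> l \in B by rewrite !inE => /orP [] // /eqP ->; rewrite eqxx.
have I_e : circuit_terms I x e = Some (b + a).
  by rewrite /circuit_terms /circuit_vec !inE eqxx orbT IB mu_B x_e.
have Il l : l != e -> I :\ l = (B :\ l) :|: [set e] by move=> le; rewrite setU1D1C.
have hmin l : tle (circuit_terms I x e) (circuit_terms I x l).
  rewrite I_e /circuit_terms /circuit_vec; case lI: (l \in I) => //.
  have [->|le] := eqVneq l e; first by rewrite IB mu_B x_e /= lexx.
  rewrite Il //; case mu_l: (mu _) => [c|] //; case x_l: (x l) => [d|] //=.
  by have [] := optimal_off_extend optB (negbT eB) ej x_e mu_B (Ilt l lI le) mu_l x_l.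
have I_card : #|I| = r.+1 by rewrite card_setU1 ?eB ?Br.
have jI : j \notin I by rewrite !inE negb_or jB eq_sym.
have I_circ : exists i, circuit_vec mu I i <> None.
  by exists e; rewrite /circuit_vec !inE eqxx orbT IB mu_B.
have I_e_fin : circuit_terms I x e <> None by rewrite I_e.
have [l le] := hx I I_card jI I_circ e I_e_fin hmin.
rewrite I_e /circuit_terms /circuit_vec; case lI: (l \in I) => //.
rewrite Il //; case mu_l: (mu _) => [c|] //; case x_l: (x l) => [d|] //= [cd].
exists ((B :\ l) :|: [set e]); split; last by rewrite !inE eqxx orbT.
by have [_] := optimal_off_extend optB (negbT eB) ej x_e mu_B (Ilt l lI le) mu_l x_l; apply.
Qed.

End OptimalCover.

Section Lift.
Variables (R : realType) (n r : nat) (mu : {set 'I_n} -> trop R).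
Hypothesis hmu : valuated_matroid r mu.
Variables (j : 'I_n) (z : 'I_n -> trop R).
Hypotheses (zj : z j = None) (z_off : min_twice_off r mu j z).
Local Notation circuit_terms := (circuit_terms mu).
Local Notation is_basis := (is_basis r mu).
Local Notation basis_off := (basis_off r mu).
Local Notation basis_through := (basis_through r mu).
Local Notation optimal := (optimal mu).
Local Notation weight := (weight mu).

Lemma optimal_swap_in G Be e : optimal is_basis z G -> optimal (basis_off j) z Be ->
  e \in Be -> e \notin G -> z e <> None -> inf_count z G = inf_count z Be ->
  exists k, optimal is_basis z ((G :\ k) :|: [set e]).
Proof.
move=> [Gb optG] [/andP [Beb jBe] optBe] eBe eG ze cnt_G.
have [Ber [be mu_Be]] := is_basisP Beb; have [Gr [g mu_G]] := is_basisP Gb.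
have eBeG : e \in Be :\: G by rewrite !inE eG eBe.
have [k] := hmu.2 Be G Ber Gr e eBeG.
rewrite !inE => /andP [kBe kG]; rewrite mu_Be mu_G.
case mu_Be': (mu ((Be :\ e) :|: [set k])) => [p|] //.
case mu_G': (mu ((G :\ k) :|: [set e])) => [q|] //= hle.
have Be'b : is_basis ((Be :\ e) :|: [set k]).
  by rewrite /is_basis card_exchange // Ber eqxx mu_Be'.
have G'b : is_basis ((G :\ k) :|: [set e]).
  by rewrite /is_basis card_exchange // Gr eqxx mu_G'.
have cnt_Be' := inf_count_exchange z eBe kBe.
case z_e: (z e) ze cnt_Be' => [a|] // _; rewrite /= addn0.
case z_k: (z k) => [dk|] /= cnt_Be'; last first.
  by have := (optG _ Be'b).1; rewrite cnt_G cnt_Be' addn1 ltnn.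
rewrite addn0 in cnt_Be'.
have kj : k != j by apply/eqP => kj; move: z_k; rewrite kj zj.
have Be'off : basis_off j ((Be :\ e) :|: [set k]).
  by rewrite /= Be'b !inE negb_or negb_and jBe orbT eq_sym kj.
have hw := (optBe _ Be'off).2 cnt_Be'.
have cnt_G' := inf_count_exchange z kG eG; rewrite z_k z_e /= !addn0 in cnt_G'.
exists k; apply: (optimal_tie (conj Gb optG) G'b cnt_G').
move: hw; rewrite /weight mu_Be mu_Be' mu_G mu_G' /=.
by rewrite !fin_sum_exchange // z_e z_k /=; lra.
Qed.

Section FromOptimalOff.
Variable B0 : {set 'I_n}.
Hypothesis optB0 : optimal (basis_off j) z B0.

Lemma optimal_off_cover_count e : e != j -> z e <> None ->
  exists Be, [/\ optimal (basis_off j) z Be, e \in Be & inf_count z Be = inf_count z B0].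
Proof.
move=> ej ze; have [Be [optBe eBe]] := optimal_off_cover z_off optB0 ej ze.
exists Be; split => //; apply/eqP; rewrite eqn_leq (optB0.2 _ optBe.1).1.
exact: (optBe.2 _ optB0.1).1.
Qed.

Lemma inf_count_through_le B1 : basis_through j B1 ->
  (inf_count z B1 <= (inf_count z B0).+1)%N.
Proof.
case/andP => /is_basisP [B1r [b1 mu_B1]] jB1.
have [/andP [/is_basisP [B0r [b0 mu_B0]] jB0] optB0'] := optB0.
have jB10 : j \in B1 :\: B0 by rewrite !inE jB1 jB0.
have [k] := hmu.2 B1 B0 B1r B0r j jB10.
rewrite !inE => /andP [kB1 kB0]; rewrite mu_B1 mu_B0.
case mu_B': (mu ((B1 :\ j) :|: [set k])) => [p|] // _.
have B'off : basis_off j ((B1 :\ j) :|: [set k]).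
  rewrite /= /is_basis card_exchange // B1r eqxx mu_B' !inE eqxx /=.
  by apply: contraNneq jB0 => ->.
have := (optB0' _ B'off).1; have := inf_count_exchange z jB1 kB1.
rewrite zj /=; set B' := (B1 :\ j) :|: [set k]; case: (z k == None) => /= *; lia.
Qed.

(* The value at [j] makes the best bases avoiding and containing [j] tie. *)
Lemma lift_finite B1 : optimal (basis_through j) z B1 ->
  (inf_count z B0 < inf_count z B1)%N ->
  forall I : {set 'I_n}, #|I| = r.+1 ->
    min_twice (circuit_terms I (update z j (Some (weight z B1 - weight z B0)))).
Proof.
move=> optB1 cnt_lt.
have [/andP [B0b jB0] optB0'] := optB0.
have [/andP [B1b jB1] optB1'] := optB1.
have cnt_B1 : inf_count z B1 = (inf_count z B0).+1.
  by apply/eqP; rewrite eqn_leq cnt_lt inf_count_through_le // /= B1b.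
set t := weight z B1 - weight z B0; set x := update z j (Some t).
have cnt_x B : inf_count z B = (inf_count x B + (j \in B))%N := inf_count_update t B zj.
have w_x B : weight x B = weight z B - (if j \in B then t else 0) := weight_update mu t B zj.
have := cnt_x B0; have := cnt_x B1; rewrite (negbTE jB0) jB1 /= => cnt_x1 cnt_x0.
have optx0 : optimal is_basis x B0.
  split => // B Bb; have := cnt_x B; case jB: (j \in B) => /= cnt_xB.
  - have Bj : basis_through j B by rewrite /= Bb jB.
    have [c1 w1] := optB1' B Bj.
    split; first lia.
    move=> c; have /w1 : inf_count z B = inf_count z B1 by lia.
    by rewrite !w_x jB (negbTE jB0) /t; lra.
  - have Bj : basis_off j B by rewrite /= Bb jB.
    have [c0 w0] := optB0' B Bj.
    split; first lia.
    move=> c; have /w0 : inf_count z B = inf_count z B0 by lia.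
    by rewrite !w_x jB (negbTE jB0); lra.
have optx1 : optimal is_basis x B1.
  apply: (optimal_tie optx0 B1b); first lia.
  by rewrite !w_x jB1 (negbTE jB0) /t; lra.
apply: optimal_cover_min_twice hmu _ => e xe.
have [->|ej] := eqVneq e j; first by exists B1.
have ze : z e <> None by move: xe; rewrite /x /update (negbTE ej).
have [Be [[/andP [Beb jBe] optBe'] eBe cnt_Be]] := optimal_off_cover_count ej ze.
exists Be; split => //; apply: (optimal_tie optx0 Beb).
  by have := cnt_x Be; rewrite (negbTE jBe); lia.
rewrite !w_x (negbTE jBe) (negbTE jB0) !subr0.
by apply: (optBe' _ _).2; rewrite // /= B0b.
Qed.

Lemma lift_infinite :
  (forall B, basis_through j B -> inf_count z B <= inf_count z B0)%N ->
  forall I : {set 'I_n}, #|I| = r.+1 -> min_twice (circuit_terms I z).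
Proof.
move=> through_le; apply: optimal_cover_min_twice hmu _ => e ze.
have ej : e != j by apply/eqP => ej; apply: ze; rewrite ej zj.
have [Be [optBe eBe cnt_Be]] := optimal_off_cover_count ej ze.
have [/andP [Beb _] _] := optBe.
have [G optG] := optimal_exists mu z (ex_intro _ Be Beb); have [Gb optG'] := optG.
have cnt_G : inf_count z G = inf_count z Be.
  apply/eqP; rewrite eqn_leq (optG' _ Beb).1 cnt_Be andbT.
  case jG: (j \in G); first by apply: through_le; rewrite /= Gb jG.
  have Goff : basis_off j G by rewrite /= Gb jG.
  exact: (optB0.2 _ Goff).1.
case eG: (e \in G); first by exists G.
have [k optGk] := optimal_swap_in optG optBe eBe (negbT eG) ze cnt_G.
by exists ((G :\ k) :|: [set e]); split; last by rewrite !inE eqxx orbT.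
Qed.

End FromOptimalOff.

Lemma lift_coordinate : (exists B, basis_off j B) ->
  exists t, forall I : {set 'I_n}, #|I| = r.+1 -> min_twice (circuit_terms I (update z j t)).
Proof.
move=> off_ex; have [B0 optB0] := optimal_exists mu z off_ex.
have [[B1 optB1 cnt_lt] | through_le] :
    (exists2 B1, optimal (basis_through j) z B1 & inf_count z B0 < inf_count z B1)%N \/
    (forall B, basis_through j B -> inf_count z B <= inf_count z B0)%N.
  case: (boolP [exists B, basis_through j B]) => [/existsP thr | /existsPn nthr].
    have [B1 optB1] := optimal_exists mu z thr.
    case: (leqP (inf_count z B1) (inf_count z B0)) => cnt_B1; last by left; exists B1.
    by right => B Bj; apply: leq_trans cnt_B1; exact: (optB1.2 B Bj).1.
  by right => B; rewrite (negbTE (nthr B)).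
- by exists (Some (weight z B1 - weight z B0)); exact: lift_finite.
- exists None => I hI; apply: (eq_min_twice _ (lift_infinite optB0 through_le hI)) => i.
  by rewrite /circuit_terms /update; case: eqVneq => // ->; rewrite zj.
Qed.

End Lift.

Section Projection.
Variables (R : realType) (n : nat).
Local Notation T := (trop R).
Implicit Types (mu nu : {set 'I_n} -> T) (B I : {set 'I_n}) (y z : 'I_n -> T).

Definition is_loop nu (e : 'I_n) := forall B, e \in B -> nu B = None.

Definition deletion mu j B := if j \in B then None else mu B.

Definition contraction mu j B := if j \in B then None else mu (B :|: [set j]).

Lemma trop_closure_loop r nu y i : trop_closure r nu y ->
  (exists B, #|B| = r /\ nu B <> None) ->
  (forall B, #|B| = r -> i \in B -> nu B = None) -> y i = None.
Proof.
move=> [_ hy] [B [Br nuB]] iloop.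
have iB : i \notin B by apply/negP => iB; apply: nuB; exact: iloop.
case y_i: (y i) => [w|] //; exfalso.
pose I := B :|: [set i].
have IB : I :\ i = B by rewrite setU1D1.
have I_card : #|I| = r.+1 by rewrite card_setU1 ?Br.
have other l : l != i -> circuit_terms nu I y l = None.
  move=> li; rewrite /circuit_terms /circuit_vec; case lI: (l \in I) => //.
  rewrite iloop //; last by rewrite !inE eq_sym li eqxx orbT.
  by move: I_card; rewrite (card_setD1 lI) => -[].
have I_circ : exists l, circuit_vec nu I l <> None.
  by exists i; rewrite /circuit_vec !inE eqxx orbT IB.
have I_i : circuit_terms nu I y i <> None.
  by rewrite /circuit_terms /circuit_vec !inE eqxx orbT IB y_i; case: (nu B) nuB.
have hmin l : tle (circuit_terms nu I y i) (circuit_terms nu I y l).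
  by have [->|li] := eqVneq l i; [exact: tle_refl | rewrite (other l li); exact: tle_None].
have [l li] := hy I I_card I_circ i I_i hmin.
by move=> eq_li; apply: I_i; rewrite /circuit_terms -eq_li; exact: other.
Qed.

Lemma trop_closure_two_terms r nu y I p q : trop_closure r nu y -> #|I| = r.+1 ->
  p \in I -> q \in I -> p != q ->
  (forall l, l \in I -> l != p -> l != q -> nu (I :\ l) = None) -> nu (I :\ p) <> None ->
  circuit_terms nu I y p = circuit_terms nu I y q.
Proof.
move=> [_ hy] Ir pI qI pq other Cp; set v := circuit_terms nu I y.
have I_circ : exists l, circuit_vec nu I l <> None by exists p; rewrite /circuit_vec pI.
have v_other l : l != p -> l != q -> v l = None.
  move=> lp lq; rewrite /v /circuit_terms /circuit_vec.
  by case lI: (l \in I); rewrite // other.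
have tie u w : u != w -> (forall l, l != u -> l != w -> v l = None) ->
    tle (v u) (v w) -> v u = v w.
  move=> uw v_uw le_uw; case vu: (v u) => [x|]; last by move: le_uw; rewrite vu; case: (v w).
  have vu_fin : v u <> None by rewrite vu.
  have vmin l : tle (v u) (v l).
    have [->|lu] := eqVneq l u; first exact: tle_refl.
    have [->//|lw] := eqVneq l w.
    by rewrite (v_uw l lu lw); exact: tle_None.
  have [l lu vl] := hy I Ir I_circ u vu_fin vmin.
  have vlu : v l = v u := vl.
  have [lw|lw] := eqVneq l w; first by rewrite -vu -vlu lw.
  by move: vlu; rewrite (v_uw l lu lw) vu.
have [le_pq|le_qp] := tle_total (v p) (v q); first exact: tie.
by symmetry; apply: tie; rewrite 1?eq_sym // => l lq lp; exact: v_other.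
Qed.

Lemma min_twice_all_None (v : 'I_n -> T) : (forall i, v i = None) -> min_twice v.
Proof. by move=> v_None i; rewrite v_None. Qed.

Lemma is_loop_deletion mu j : is_loop (deletion mu j) j.
Proof. by move=> B jB; rewrite /deletion jB. Qed.

Lemma is_loop_contraction mu j : is_loop (contraction mu j) j.
Proof. by move=> B jB; rewrite /contraction jB. Qed.

Lemma deletion_is_loop mu j e : is_loop mu e -> is_loop (deletion mu j) e.
Proof. by move=> e_loop B eB; rewrite /deletion e_loop ?if_same. Qed.

Lemma contraction_is_loop mu j e : is_loop mu e -> is_loop (contraction mu j) e.
Proof. by move=> e_loop B eB; rewrite /contraction e_loop ?if_same // inE eB. Qed.

Section Deletion.
Variables (r : nat) (mu : {set 'I_n} -> T) (j : 'I_n).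
Hypotheses (hmu : valuated_matroid r mu) (off_ex : exists B, basis_off r mu j B).

Lemma circuit_vec_deletion_off I : j \notin I ->
  circuit_vec (deletion mu j) I =1 circuit_vec mu I.
Proof.
move=> jI i; rewrite /circuit_vec /deletion.
by case: (i \in I); rewrite // !inE (negbTE jI) andbF.
Qed.

Lemma circuit_vec_deletion_on I i : j \in I -> i != j ->
  circuit_vec (deletion mu j) I i = None.
Proof.
move=> jI ij; rewrite /circuit_vec /deletion.
by case: (i \in I); rewrite // !inE eq_sym ij jI.
Qed.

Lemma deletion_valuated : valuated_matroid r (deletion mu j).
Proof.
have [_ hex] := hmu; have [B0 /andP [/is_basisP [B0r [b0 mu_B0]] jB0]] := off_ex.
split; first by exists B0; rewrite /deletion (negbTE jB0) mu_B0.
move=> I J Ir Jr i iIJ; have [k kJI] := exists_setD (etrans Ir (esym Jr)) iIJ.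
rewrite /deletion; case jI: (j \in I); first by exists k => //=; exact: tle_None.
case jJ: (j \in J); first by exists k; rewrite // tadd_None_r; exact: tle_None.
have [k' k'JI hle] := hex I J Ir Jr i iIJ.
exists k' => //; move: k'JI iIJ => /setDP [k'J k'I] /setDP [iI iJ].
have jI' : j \notin (I :\ i) :|: [set k'].
  by apply: notin_exchange; rewrite ?jI //; apply: contraFneq jJ => ->.
have jJ' : j \notin (J :\ k') :|: [set i].
  by apply: notin_exchange; rewrite ?jJ //; apply: contraFneq jI => ->.
by rewrite ifN; [rewrite ifN | exact: jI'].
Qed.

Lemma deletion_closure z : tnonzero z ->
  trop_closure r (deletion mu j) z <->
  z j = None /\ exists t, trop_closure r mu (update z j t).
Proof.
move=> z_nz; split=> [z_cl | [zj [t [_ ht]]]].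
  have zj : z j = None.
    apply: (trop_closure_loop z_cl deletion_valuated.1) => B _.
    exact: is_loop_deletion.
  have z_off : min_twice_off r mu j z.
    move=> I Ir jI [i Ci]; apply: (eq_min_twice _ (z_cl.2 I Ir _)).
      by move=> l; rewrite /circuit_terms circuit_vec_deletion_off.
    by exists i; rewrite circuit_vec_deletion_off.
  have [t ht] := lift_coordinate hmu zj z_off off_ex.
  by split => //; exists t; split; [exact: update_nonzero | move=> I Ir _; exact: ht].
split => // I Ir [i Ci]; case jI: (j \in I).
  apply: min_twice_all_None => l; have [->|lj] := eqVneq l j; first by rewrite zj tadd_None_r.
  by rewrite circuit_vec_deletion_on.
have jI' : j \notin I by rewrite jI.
apply: (eq_min_twice _ (ht I Ir _)); last by exists i; rewrite -circuit_vec_deletion_off.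
move=> l; rewrite circuit_vec_deletion_off // /update.
by case: eqVneq => // ->; rewrite /circuit_vec jI.
Qed.

End Deletion.

Section Contraction.
Variables (r : nat) (mu : {set 'I_n} -> T) (j : 'I_n).
Hypotheses (hmu : valuated_matroid r mu) (through : forall B, is_basis r mu B -> j \in B).

Let r_eq : r = r.-1.+1.
Proof.
have [[B0 [B0r /eqP mu_B0]] _] := hmu.
have jB0 : j \in B0 by apply: through; rewrite /is_basis B0r eqxx.
by rewrite -B0r (card_setD1 jB0).
Qed.

Let off_None B : #|B| = r -> j \notin B -> mu B = None.
Proof.
move=> Br; apply: contraNeq => mu_B; apply: through.
by rewrite /is_basis Br eqxx.
Qed.

Lemma circuit_vec_contraction_off I i : j \notin I -> i != j ->
  circuit_vec (contraction mu j) I i = circuit_vec mu (I :|: [set j]) i.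
Proof.
move=> jI ij; rewrite /circuit_vec /contraction !inE (negbTE ij) (negbTE jI) orbF andbF.
by case: (i \in I); rewrite // setU1D1C.
Qed.

Lemma circuit_vec_contraction_on I i : j \in I -> i != j ->
  circuit_vec (contraction mu j) I i = None.
Proof.
move=> jI ij; rewrite /circuit_vec /contraction.
by case: (i \in I); rewrite // !inE eq_sym ij jI.
Qed.

Lemma contraction_valuated : valuated_matroid r.-1 (contraction mu j).
Proof.
have [[B0 [B0r mu_B0]] hex] := hmu.
have jB0 : j \in B0 by apply: through; rewrite /is_basis B0r eqxx; apply/eqP.
split.
  exists (B0 :\ j); rewrite /contraction !inE eqxx setD1U1 //.
  by move: B0r; rewrite (card_setD1 jB0) => <-.
move=> I J Ir Jr i iIJ; have [k kJI] := exists_setD (etrans Ir (esym Jr)) iIJ.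
rewrite /contraction; case jI: (j \in I); first by exists k => //=; exact: tle_None.
case jJ: (j \in J); first by exists k; rewrite // tadd_None_r; exact: tle_None.
move: (iIJ); rewrite !inE => /andP [iJ iI].
have ij : i != j by apply: contraTneq iI => ->; rewrite jI.
have Ijr : #|I :|: [set j]| = r by rewrite card_setU1 ?jI // Ir -r_eq.
have Jjr : #|J :|: [set j]| = r by rewrite card_setU1 ?jJ // Jr -r_eq.
have iIJ' : i \in (I :|: [set j]) :\: (J :|: [set j]).
  by rewrite !inE iI (negbTE iJ) (negbTE ij).
have [k' + hle] := hex _ _ Ijr Jjr i iIJ'.
rewrite !inE negb_or => /andP [/andP [k'I k'j] k'J].
rewrite (negbTE k'j) orbF in k'J.
exists k'; first by rewrite !inE k'I k'J.
rewrite (setU1D1C I ij) (setU1D1C J k'j) !(setUAC _ [set j]) in hle.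
have jI' : j \notin (I :\ i) :|: [set k'] by rewrite notin_exchange ?jI // eq_sym.
have jJ' : j \notin (J :\ k') :|: [set i] by rewrite notin_exchange ?jJ // eq_sym.
by rewrite ifN; [rewrite ifN | exact: jI'].
Qed.

Lemma trop_closure_of_contraction z : trop_closure r.-1 (contraction mu j) z ->
  trop_closure r mu (update z j None).
Proof.
move=> z_cl; have zj : z j = None.
  apply: (trop_closure_loop z_cl contraction_valuated.1) => B _.
  exact: is_loop_contraction.
split; first exact: update_nonzero z_cl.1 zj.
move=> I Ir [i Ci]; have iI : i \in I by move: Ci; rewrite /circuit_vec; case: (i \in I).
have Iir : #|I :\ i| = r by move: Ir; rewrite (card_setD1 iI) => -[].
have jI : j \in I.
  apply: contraT => jI; have jIi : j \notin I :\ i by rewrite !inE negb_and jI orbT.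
  by move: Ci; rewrite /circuit_vec iI off_None.
have Ijr : #|I :\ j| = r by move: Ir; rewrite (card_setD1 jI) => -[].
have jIj : j \notin I :\ j by rewrite !inE eqxx.
have ij : i != j by apply: contra_not_neq Ci => ->; rewrite /circuit_vec jI off_None.
rewrite r_eq in Ijr.
apply: (eq_min_twice _ (z_cl.2 _ Ijr _)).
  move=> l; rewrite /update; have [->|lj] := eqVneq l j.
    by rewrite /circuit_vec (negbTE jIj) tadd_None_r.
  by rewrite circuit_vec_contraction_off // setD1U1.
by exists i; rewrite circuit_vec_contraction_off // setD1U1.
Qed.

Lemma contraction_closure z : tnonzero z ->
  trop_closure r.-1 (contraction mu j) z <->
  z j = None /\ exists t, trop_closure r mu (update z j t).
Proof.
move=> z_nz; split=> [z_cl | [zj [t [_ ht]]]].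
  split; last by exists None; exact: trop_closure_of_contraction.
  apply: (trop_closure_loop z_cl contraction_valuated.1) => B _.
  exact: is_loop_contraction.
split => // I Ir [i Ci]; case jI: (j \in I).
  apply: min_twice_all_None => l; have [->|lj] := eqVneq l j; first by rewrite zj tadd_None_r.
  by rewrite circuit_vec_contraction_on.
have Ijr : #|I :|: [set j]| = r.+1 by rewrite card_setU1 ?jI // Ir -r_eq.
have jIj : j \in I :|: [set j] by rewrite !inE eqxx orbT.
have Cj : circuit_vec mu (I :|: [set j]) j = None.
  by rewrite /circuit_vec jIj setU1D1 ?jI // off_None ?jI // Ir -r_eq.
have ij : i != j by apply: contra_not_neq Ci => ->; rewrite /circuit_vec jI.
apply: (eq_min_twice _ (ht _ Ijr _)); last by exists i; rewrite -circuit_vec_contraction_off ?jI.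
move=> l; rewrite /update; have [->|lj] := eqVneq l j; first by rewrite Cj /circuit_vec jI.
by rewrite circuit_vec_contraction_off ?jI.
Qed.

End Contraction.

End Projection.

Section IteratedProjection.
Variables (R : realType) (n : nat).
Local Notation T := (trop R).
Implicit Types (mu : {set 'I_n} -> T) (z : 'I_n -> T).

Lemma exists_loop_projection r mu j : valuated_matroid r mu ->
  exists r' (mu' : {set 'I_n} -> T),
  [/\ valuated_matroid r' mu', is_loop mu' j,
      forall e, is_loop mu e -> is_loop mu' e &
      forall z, tnonzero z ->
        trop_closure r' mu' z <-> z j = None /\ exists t, trop_closure r mu (update z j t)].
Proof.
move=> hmu; case: (boolP [exists B, basis_off r mu j B]) => [/existsP off_ex | /existsPn no_off].
  exists r, (deletion mu j); split.
  - exact: deletion_valuated.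
  - exact: is_loop_deletion.
  - exact: deletion_is_loop.
  - exact: deletion_closure.
have through B : is_basis r mu B -> j \in B.
  by move=> Bb; apply: contraNT (no_off B) => jB; rewrite /= Bb.
exists r.-1, (contraction mu j); split.
- exact: contraction_valuated.
- exact: is_loop_contraction.
- exact: contraction_is_loop.
- exact: contraction_closure.
Qed.

Lemma exists_projection r mu (s : seq 'I_n) : valuated_matroid r mu ->
  exists r' (mu' : {set 'I_n} -> T),
  [/\ valuated_matroid r' mu', forall e, e \in s -> is_loop mu' e &
      forall z, tnonzero z ->
        trop_closure r' mu' z <-> (forall e, e \in s -> z e = None) /\
          exists x, trop_closure r mu x /\ forall e, e \notin s -> x e = z e].
Proof.
move=> hmu; elim: s => [|a s [r1 [mu1 [mu1_vm s_loops mu1_cl]]]].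
  exists r, mu; split => // z z_nz; split; first by move=> z_cl; split => //; exists z.
  by move=> [_ [x [x_cl xz]]]; apply: (eq_trop_closure _ x_cl) => e; exact: xz.
have [r2 [mu2 [mu2_vm a_loop loop_mono mu2_cl]]] := exists_loop_projection a mu1_vm.
exists r2, mu2; split => //.
  by move=> e; rewrite inE => /orP [/eqP -> // | es]; apply: loop_mono; exact: s_loops.
move=> z z_nz; rewrite mu2_cl //; split.
  move=> [za [t t_cl]]; have [zs [x [x_cl xz]]] := (mu1_cl _ t_cl.1).1 t_cl.
  split.
    move=> e; rewrite inE => /orP [/eqP -> // | es].
    by move: (zs e es); rewrite /update; case: eqVneq => [-> _ | //].
  exists x; split => // e; rewrite inE negb_or => /andP [ea es].
  by rewrite xz // /update (negbTE ea).
move=> [zs [x [x_cl xz]]]; have za : z a = None by apply: zs; rewrite inE eqxx.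
split => //; exists (if a \in s then None else x a).
apply/(mu1_cl _ (update_nonzero _ z_nz za)); split.
  move=> e es; rewrite /update; case: (eqVneq e a) => [ea | ea]; first by rewrite -ea es.
  by apply: zs; rewrite inE es orbT.
exists x; split => // e es; rewrite /update; case: (eqVneq e a) => [ea | ea].
  by move: es; rewrite ea => /negbTE ->.
by apply: xz; rewrite inE negb_or ea es.
Qed.

End IteratedProjection.

Section Pullback.
Variables (R : realType) (n k : nat) (mu1 : {set 'I_n} -> trop R).
Variables (D : {set 'I_n}) (sg : 'I_n -> 'I_n) (a : 'I_n -> R).
Local Notation T := (trop R).
Implicit Types (B I : {set 'I_n}) (y z : 'I_n -> T).

Definition admissible B := (B \subset D) && (#|sg @: B| == #|B|).

Definition pullback B : T :=
  if admissible B then tadd (Some (\sum_(i in B) a i)) (mu1 (sg @: B)) else None.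

Definition mono_act z i : T := if i \in D then tadd (Some (a i)) (z (sg i)) else None.

Definition sg_inv e := odflt e [pick i in D | sg i == e].

Lemma sg_invP e : e \in sg @: D -> sg_inv e \in D /\ sg (sg_inv e) = e.
Proof.
case/imsetP => i iD ->; rewrite /sg_inv; case: pickP => [i' /andP [i'D /eqP] | /(_ i)] //=.
by rewrite iD eqxx.
Qed.

Lemma admissibleP B : reflect (B \subset D /\ {in B &, injective sg}) (admissible B).
Proof. by apply: (iffP andP) => -[BD /imset_injP]. Qed.

Lemma admissible_card B : admissible B -> #|sg @: B| = #|B|.
Proof. by case/andP => _ /eqP. Qed.

Lemma admissible_subset B B' : admissible B -> B' \subset B -> admissible B'.
Proof.
move=> /admissibleP [BD sg_inj] B'B; apply/admissibleP; split; first exact: subset_trans BD.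
by move=> x y xB' yB'; apply: sg_inj; exact: (subsetP B'B).
Qed.

Lemma admissible_exchange B e l : admissible B -> l \in D ->
  sg l \notin sg @: (B :\ e) -> admissible ((B :\ e) :|: [set l]).
Proof.
move=> admB lD l_new; have admBe := admissible_subset admB (subsetDl B [set e]).
have lBe : l \notin B :\ e by apply: contra l_new; exact: imset_f.
rewrite /admissible subUset sub1set lD (subset_trans (subsetDl _ _) (proj1 (andP admB))).
by rewrite imsetU imset_set1 !card_setU1 // (admissible_card admBe) eqxx.
Qed.

Lemma pullback_exchange B e l : admissible B -> e \in B -> l \notin B -> l \in D ->
  sg l \notin sg @: (B :\ e) ->
  pullback ((B :\ e) :|: [set l]) =
  tadd (Some (\sum_(i in B) a i - a e + a l)) (mu1 (((sg @: B) :\ sg e) :|: [set sg l])).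
Proof.
move=> admB eB lB lD l_new; rewrite /pullback (admissible_exchange admB lD l_new).
by rewrite sum_exchange // imsetU imset_set1 imsetD1 //; case/admissibleP: admB.
Qed.

Lemma sg_inv_lift B' : B' \subset sg @: D ->
  [/\ admissible (sg_inv @: B'), sg @: (sg_inv @: B') = B' & #|sg_inv @: B'| = #|B'|].
Proof.
move=> B'D; have inv e : e \in B' -> sg_inv e \in D /\ sg (sg_inv e) = e.
  by move=> eB'; apply: sg_invP; exact: (subsetP B'D).
have inv_inj : {in B' &, injective sg_inv}.
  by move=> x y xB yB xy; rewrite -(inv x xB).2 -(inv y yB).2 xy.
have img : sg @: (sg_inv @: B') = B'.
  rewrite -imset_comp (eq_in_imset (g := id)) ?imset_id // => e eB'.
  by rewrite /= (inv e eB').2.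
have card : #|sg_inv @: B'| = #|B'| by exact: card_in_imset.
split => //; rewrite /admissible img card eqxx andbT.
by apply/subsetP => x /imsetP [e eB' ->]; exact: (inv e eB').1.
Qed.

Lemma pullback_swap I J i j : admissible I -> admissible J ->
  i \in I -> i \notin J -> j \in J -> j \notin I ->
  sg j \notin sg @: (I :\ i) -> sg i \notin sg @: (J :\ j) ->
  tadd (pullback ((I :\ i) :|: [set j])) (pullback ((J :\ j) :|: [set i])) =
  tadd (Some (\sum_(l in I) a l + \sum_(l in J) a l))
    (tadd (mu1 (((sg @: I) :\ sg i) :|: [set sg j])) (mu1 (((sg @: J) :\ sg j) :|: [set sg i]))).
Proof.
move=> admI admJ iI iJ jJ jI sgj_new sgi_new.
have [/subsetP ID _] := admissibleP _ admI; have [/subsetP JD _] := admissibleP _ admJ.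
have iD := ID _ iI; have jD := JD _ jJ.
rewrite !pullback_exchange // taddACA_Some; congr (tadd (Some _) _); lra.
Qed.

Lemma pullback_valuated : valuated_matroid k mu1 ->
  (forall B, mu1 B <> None -> B \subset sg @: D) -> valuated_matroid k pullback.
Proof.
move=> [[B' [B'k mu_B']] hex] supp; split.
  have [adm img card] := sg_inv_lift (supp _ mu_B').
  exists (sg_inv @: B'); rewrite card B'k /pullback adm img; split => //.
  by case: (mu1 B') mu_B'.
move=> I J Ik Jk i iIJ; have [j' j'JI] := exists_setD (etrans Ik (esym Jk)) iIJ.
have [admI|nI] := boolP (admissible I); last first.
  by exists j' => //; rewrite [pullback I]/pullback (negbTE nI); exact: tle_None.
have [admJ|nJ] := boolP (admissible J); last first.
  by exists j' => //; rewrite [pullback J]/pullback (negbTE nJ) tadd_None_r; exact: tle_None.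
have pIJ : tadd (pullback I) (pullback J) =
    tadd (Some (\sum_(l in I) a l + \sum_(l in J) a l)) (tadd (mu1 (sg @: I)) (mu1 (sg @: J))).
  by rewrite /pullback admI admJ taddACA_Some.
have [_ injI] := admissibleP _ admI; have [_ injJ] := admissibleP _ admJ.
move: (iIJ) => /setDP [iI iJ]; have sgiI : sg i \in sg @: I by exact: imset_f.
case: (boolP (sg i \in sg @: J)) => [/imsetP [j jJ sg_ij] | sgiJ].
  have jI : j \notin I by apply: contra iJ => jI; rewrite (injI _ _ iI jI sg_ij).
  exists j; first by rewrite !inE jI jJ.
  have sgj_new : sg j \notin sg @: (I :\ i) by rewrite imsetD1 // -sg_ij !inE eqxx.
  have sgi_new : sg i \notin sg @: (J :\ j) by rewrite imsetD1 // sg_ij !inE eqxx.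
  have sgiJ : sg i \in sg @: J by rewrite sg_ij imset_f.
  by rewrite pIJ pullback_swap // tle_tadd2l -sg_ij !setD1U1 //; exact: tle_refl.
have sgiIJ : sg i \in sg @: I :\: sg @: J by rewrite !inE sgiJ imset_f.
have [s /setDP [sJ sI] hle] := hex _ _ (etrans (admissible_card admI) Ik)
  (etrans (admissible_card admJ) Jk) _ sgiIJ.
have /imsetP [j jJ sj] := sJ.
have jI : j \notin I by apply: contra sI => jI; rewrite sj imset_f.
exists j; first by rewrite !inE jI jJ.
have sgj_new : sg j \notin sg @: (I :\ i).
  by rewrite imsetD1 // -sj; apply: contra sI => /setD1P [].
have sgi_new : sg i \notin sg @: (J :\ j).
  by rewrite imsetD1 //; apply: contra sgiJ => /setD1P [].
by rewrite pIJ pullback_swap // tle_tadd2l -sj.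
Qed.

End Pullback.

Section PullbackClosure.
Variables (R : realType) (n k : nat) (mu1 : {set 'I_n} -> trop R).
Variables (D : {set 'I_n}) (sg : 'I_n -> 'I_n) (a : 'I_n -> R).
Hypothesis mu1_vm : valuated_matroid k mu1.
Hypothesis mu1_supp : forall B, mu1 B <> None -> B \subset sg @: D.
Local Notation T := (trop R).
Local Notation admissible := (admissible D sg).
Local Notation pullback := (pullback mu1 D sg a).
Local Notation mono_act := (mono_act D sg a).
Local Notation sg_inv := (sg_inv D sg).
Implicit Types (B I : {set 'I_n}) (y z : 'I_n -> T).

Lemma circuit_vec_pullback I i : admissible I -> i \in I ->
  circuit_vec pullback I i =
  tadd (Some (\sum_(l in I :\ i) a l)) (circuit_vec mu1 (sg @: I) (sg i)).
Proof.
move=> admI iI; have admIi := admissible_subset admI (subsetDl I [set i]).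
rewrite /circuit_vec iI imset_f // /pullback admIi imsetD1 //.
by case/admissibleP: admI.
Qed.

Lemma min_twice_pullback I y z (c : R) : admissible I ->
  (forall i, i \in I -> y i = tadd (Some (c + a i)) (z (sg i))) ->
  min_twice (circuit_terms pullback I y) <-> min_twice (circuit_terms mu1 (sg @: I) z).
Proof.
move=> admI yI; have [_ injI] := elimT (admissibleP D sg I) admI.
apply: (min_twice_transfer (c := c + \sum_(l in I) a l) injI).
- by move=> i iI; rewrite /circuit_terms /circuit_vec (negbTE iI).
- by move=> e eI; rewrite /circuit_terms /circuit_vec (negbTE eI).
move=> i iI; rewrite /circuit_terms circuit_vec_pullback // yI // taddACA_Some.
by congr (tadd (Some _) _); rewrite (big_setD1 i iI) /=; lra.
Qed.

Lemma circuit_terms_pullback_parallel I y z (c : R) i0 i1 :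
  (forall i, i \in I -> y i = tadd (Some (c + a i)) (z (sg i))) ->
  I \subset D -> admissible (I :\ i0) -> i0 \in I -> i1 \in I :\ i0 -> sg i1 = sg i0 ->
  circuit_terms pullback I y i1 = circuit_terms pullback I y i0.
Proof.
move=> yI ID adm0 i0I /setD1P [i10 i1I] sg10.
have i0I1 : i0 \in I :\ i1 by rewrite !inE eq_sym i10.
have img j l : j \in I -> l \in I :\ j -> sg l = sg j -> sg @: (I :\ j) = sg @: I.
  move=> jI lIj sglj; rewrite [RHS](imset_setD1U1 _ jI).
  by apply/esym/setUidPl; rewrite sub1set -sglj imset_f.
have card1 : #|sg @: (I :\ i1)| = #|I :\ i1|.
  rewrite (img i1 i0) // -(img i0 i1) // ?inE ?i10 // (admissible_card adm0).
  by apply: succn_inj; rewrite -!card_setD1.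
have adm1 : admissible (I :\ i1).
  by rewrite /admissible card1 eqxx andbT (subset_trans (subsetDl _ _) ID).
rewrite /circuit_terms /circuit_vec i0I i1I /pullback adm0 adm1.
rewrite (img i0 i1) ?inE ?i10 // (img i1 i0) // !yI // sg10 !taddACA_Some.
have s0 : \sum_(l in I) a l = a i0 + \sum_(l in I :\ i0) a l := big_setD1 _ i0I.
have s1 : \sum_(l in I) a l = a i1 + \sum_(l in I :\ i1) a l := big_setD1 _ i1I.
by congr (tadd (Some _) _); lra.
Qed.

Lemma pullback_closure_of y z : trop_closure k mu1 z -> tnonzero y ->
  proj_eq y (mono_act z) -> trop_closure k pullback y.
Proof.
move=> [_ hz] y_nz [c yc]; split => // I Ik _ i0 yi0 hmin.
have hy i : y i = if i \in D then tadd (Some (c + a i)) (z (sg i)) else None.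
  by rewrite yc /mono_act; case: ifP => _; rewrite ?taddA_Some ?tadd_None_r.
have i0I : i0 \in I.
  by apply: contra_notT yi0 => i0I; rewrite /circuit_vec (negbTE i0I).
have adm0 : admissible (I :\ i0).
  by apply: contra_notT yi0 => /negbTE adm0; rewrite /circuit_vec i0I /pullback adm0.
have i0D : i0 \in D by apply: contra_notT yi0 => /negbTE i0D; rewrite hy i0D tadd_None_r.
have ID : I \subset D.
  by rewrite -(setD1U1 i0I) subUset sub1set i0D andbT; case/andP: adm0.
have yI i : i \in I -> y i = tadd (Some (c + a i)) (z (sg i)).
  by move=> iI; rewrite hy (subsetP ID _ iI).
case: (boolP (sg i0 \in sg @: (I :\ i0))) => [/imsetP [i1 i1I0 sg01] | sg0_new].
  by exists i1; [case/setD1P: i1I0 | exact: circuit_terms_pullback_parallel yI ID adm0 i0I i1I0 _].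
have admI : admissible I.
  rewrite /admissible ID (imset_setD1U1 _ i0I) card_setU1 //.
  by rewrite (admissible_card adm0) -card_setD1 ?eqxx.
have mu1_0 : circuit_vec mu1 (sg @: I) (sg i0) <> None.
  by apply: contra_not yi0 => C0; rewrite circuit_vec_pullback // C0.
have hw := hz (sg @: I) (etrans (admissible_card admI) Ik) (ex_intro _ (sg i0) mu1_0).
exact: ((min_twice_pullback admI yI).2 hw i0 yi0 hmin).
Qed.

Lemma admissible_through B' i : B' \subset sg @: D -> sg i \in B' -> i \in D ->
  exists B, [/\ admissible B, sg @: B = B', i \in B &
                forall l, sg l = sg i -> l != i -> l \notin B].
Proof.
move=> B'D siB' iD.
have [admBt sgBt cardBt] := sg_inv_lift (subset_trans (subsetDl B' [set sg i]) B'D).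
set Bt := sg_inv @: (B' :\ sg i) in admBt sgBt cardBt.
have notBt l : sg l = sg i -> l \notin Bt.
  by move=> sgl; apply/negP => /(imset_f sg); rewrite sgBt sgl !inE eqxx.
exists (Bt :|: [set i]); split.
- rewrite /admissible subUset sub1set iD andbT imsetU imset_set1 sgBt setD1U1 //.
  by rewrite card_setU1 ?notBt // cardBt -card_setD1 // eqxx andbT; case/andP: admBt.
- by rewrite imsetU imset_set1 sgBt setD1U1.
- by rewrite !inE eqxx orbT.
- by move=> l sgl li; rewrite !inE negb_or notBt.
Qed.

Lemma pullback_loop i : (forall B', is_basis k mu1 B' -> sg i \notin B') ->
  forall B, #|B| = k -> i \in B -> pullback B = None.
Proof.
move=> no_basis B Bk iB; rewrite /pullback; case: ifP => // admB.
case mB: (mu1 (sg @: B)) => [p1|]; last exact: tadd_None_r.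
have sgBb : is_basis k mu1 (sg @: B) by rewrite /is_basis (admissible_card admB) Bk eqxx mB.
by move: (no_basis _ sgBb); rewrite imset_f.
Qed.

Section Closure.
Variable y : 'I_n -> T.
Hypothesis y_cl : trop_closure k pullback y.

Let pullback_basis : exists B, #|B| = k /\ pullback B <> None.
Proof. exact: (pullback_valuated a mu1_vm mu1_supp).1. Qed.

Lemma pullback_closure_outside i : i \notin D -> y i = None.
Proof.
move=> iD; apply: trop_closure_loop y_cl pullback_basis _ => B _ iB.
by rewrite /pullback ifN //; apply: contra iD => /andP [/subsetP BD _]; exact: BD.
Qed.

Lemma pullback_closure_parallel i i' : i \in D -> i' \in D -> sg i' = sg i ->
  tadd (Some (- a i)) (y i) = tadd (Some (- a i')) (y i').
Proof.
move=> iD i'D sgi'; have [-> // | i'i] := eqVneq i' i.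
case: (boolP [exists B', is_basis k mu1 B' && (sg i \in B')]); last first.
  move=> /existsPn no_basis; have loop l : sg l = sg i -> y l = None.
    move=> sgl; apply: trop_closure_loop y_cl pullback_basis _; apply: pullback_loop.
    by move=> B' B'b; rewrite sgl; apply: contraNN (no_basis B') => ->; rewrite B'b.
  by rewrite !loop.
case/existsP => B' /andP [B'b siB']; have [B'k [m mB']] := is_basisP B'b.
have B'D : B' \subset sg @: D by apply: mu1_supp; rewrite mB'.
have [B [admB sgB iB notB]] := admissible_through B'D siB' iD.
(* [I] is a circuit whose only finite entries sit at the parallel pair [i, i']. *)
have i'B := notB _ sgi' i'i; pose I := B :|: [set i'].
have Bk : #|B| = k by rewrite -(admissible_card admB) sgB.
have sgi'_new : sg i' \notin sg @: (B :\ i).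
  have [_ injB] := elimT (admissibleP D sg B) admB.
  by rewrite imsetD1 // sgB sgi' !inE eqxx.
have Ik : #|I| = k.+1 by rewrite card_setU1 // Bk.
have i'I : i' \in I by rewrite !inE eqxx orbT.
have iI : i \in I by rewrite in_setU iB.
have other l : l \in I -> l != i' -> l != i -> pullback (I :\ l) = None.
  move=> lI li' li; rewrite /pullback ifN //; apply/negP => /admissibleP [_ inj].
  have iIl : i \in I :\ l by rewrite in_setD1 eq_sym li iI.
  have i'Il : i' \in I :\ l by rewrite in_setD1 eq_sym li' i'I.
  by move: i'i; rewrite (inj _ _ i'Il iIl sgi') eqxx.
have pI' : pullback (I :\ i') = Some (\sum_(l in B) a l + m).
  by rewrite setU1D1 // /pullback admB sgB mB'.
have pI : pullback (I :\ i) = Some (\sum_(l in B) a l - a i + a i' + m).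
  have pex := pullback_exchange mu1 a admB iB i'B i'D sgi'_new.
  by rewrite /I setU1D1C 1?eq_sym // pex sgB sgi' setD1U1 // mB'.
have pI'_fin : pullback (I :\ i') <> None by rewrite pI'.
have := trop_closure_two_terms y_cl Ik i'I iI i'i other pI'_fin.
rewrite /circuit_terms /circuit_vec i'I iI pI pI' => E.
by symmetry; apply: (tadd_Some_shift E); lra.
Qed.

Lemma pullback_closure_to : exists2 z, trop_closure k mu1 z & y =1 mono_act z.
Proof.
pose z e := if e \in sg @: D then tadd (Some (- a (sg_inv e))) (y (sg_inv e)) else None.
have yz : y =1 mono_act z.
  move=> i; rewrite /mono_act; case: ifP => iD; last exact: pullback_closure_outside (negbT iD).
  have sgiD : sg i \in sg @: D by exact: imset_f.
  have [invD inv_sg] := sg_invP sgiD.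
  by rewrite /z sgiD -(pullback_closure_parallel iD invD inv_sg) taddA_Some subrr tadd0.
exists z => //; split.
  have [i yi] := y_cl.1; exists (sg i); move: yi; rewrite yz /mono_act.
  by case: ifP => // _; case: (z (sg i)).
move=> I' I'k [e Ce]; have eI' : e \in I' by move: Ce; rewrite /circuit_vec; case: ifP.
case: (boolP (I' \subset sg @: D)) => [I'D | /subsetPn [e0 e0I' e0D]]; last first.
  apply: min_twice_all_None => i0; rewrite /circuit_vec; case: ifP => // i0I'.
  have [-> | i0e0] := eqVneq i0 e0; first by rewrite /z (negbTE e0D) tadd_None_r.
  case m: (mu1 (I' :\ i0)) => [p|] //.
  have /subsetP /(_ e0) : I' :\ i0 \subset sg @: D by apply: mu1_supp; rewrite m.
  by rewrite !inE eq_sym i0e0 e0I' (negbTE e0D) => /(_ isT).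
have [admBt sgBt cardBt] := sg_inv_lift I'D; set Bt := sg_inv @: I' in admBt sgBt cardBt.
have yBt i : i \in Bt -> y i = tadd (Some (0 + a i)) (z (sg i)).
  by move=> iBt; rewrite yz /mono_act add0r ifT //; case/andP: admBt => /subsetP ->.
have CBt : exists i, circuit_vec pullback Bt i <> None.
  have eBt : sg_inv e \in Bt by exact: imset_f.
  exists (sg_inv e); rewrite circuit_vec_pullback // sgBt (sg_invP (subsetP I'D _ eI')).2.
  by case: (circuit_vec mu1 I' e) Ce.
have := y_cl.2 Bt (etrans cardBt I'k) CBt.
by rewrite (min_twice_pullback admBt yBt) sgBt.
Qed.

End Closure.

Lemma pullback_closure y : tnonzero y ->
  trop_closure k pullback y <-> exists2 z, trop_closure k mu1 z & proj_eq y (mono_act z).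
Proof.
move=> y_nz; split => [y_cl | [z z_cl yz]]; last exact: pullback_closure_of z_cl y_nz yz.
have [z z_cl yz] := pullback_closure_to y_cl.
by exists z => //; exists 0 => i; rewrite tadd0.
Qed.

End PullbackClosure.

Section WeaklyMonomial.
Variable R : realType.
Local Notation T := (trop R).

Lemma tminA : associative (@tmin R).
Proof. by case=> [x|] [y|] [z|] //=; rewrite minA. Qed.

Lemma tminC : commutative (@tmin R).
Proof. by case=> [x|] [y|] //=; rewrite minC. Qed.

Lemma tmin0 : left_id None (@tmin R).
Proof. by case. Qed.

HB.instance Definition _ := Monoid.isComLaw.Build T None (@tmin R) tminA tminC tmin0.

Lemma big_tmin1 n (F : 'I_n -> T) k : (forall j, j != k -> F j = None) ->
  \big[@tmin R/None]_(j < n) F j = F k.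
Proof.
move=> F_other; rewrite (bigD1 k) //= big1 => [|j /F_other //].
by case: (F k).
Qed.

Lemma weakly_monomial_trop_mxv (K : fieldType) (val : K -> T) n (A : 'M[K]_n) :
  (forall c, val c = None <-> c = 0) -> weakly_monomial A ->
  exists D sg a, forall x, trop_mxv val A x =1 mono_act D sg a x.
Proof.
move=> val0 hA; pose D := [set i | [exists j, A i j != 0]].
pose sg i := odflt i [pick j | A i j != 0]; pose a i := odflt 0 (val (A i (sg i))).
have sgP i : i \in D -> A i (sg i) != 0 /\ forall j, A i j != 0 -> j = sg i.
  rewrite inE => /existsP [j Aij]; rewrite /sg; case: pickP => [j' Aij' | /(_ j)] /=.
    by split => // l Ail; apply: hA Ail Aij'.
  by rewrite Aij.
have A_out i j : i \notin D -> A i j = 0.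
  by move=> iD; apply/eqP; apply: contraNT iD => Aij; rewrite inE; apply/existsP; exists j.
have val_0 : val 0 = None by apply/val0.
exists D, sg, a => x i; rewrite /trop_mxv /mono_act; case: ifP => iD.
  have [Ai_sg Ai_other] := sgP i iD.
  rewrite (big_tmin1 (k := sg i)) /a; last first.
    move=> j j_sg; suff -> : A i j = 0 by rewrite val_0.
    by apply/eqP; apply: contraNT j_sg => /Ai_other ->.
  by case val_sg: (val _) => [v|] //; move/val0: val_sg Ai_sg => ->; rewrite eqxx.
by rewrite big1 // => j _; rewrite A_out ?iD // val_0.
Qed.

End WeaklyMonomial.

Theorem corollary2p25 (R : realType) (K : fieldType) (val : K -> trop R)
  (hval : nonarch_valuation val) (n r : nat) (mu : {set 'I_n} -> trop R)
  (hmu : valuated_matroid r mu) (A : 'M[K]_n) (hA : weakly_monomial A) :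
  tropical_linear_space (trop_image val A (trop_closure r mu)).
Proof.
have [val0 _ _] := hval.
have [D [sg [a mxvE]]] := weakly_monomial_trop_mxv val0 hA.
have [r1 [mu1 [mu1_vm s_loops mu1_cl]]] := exists_projection (enum (~: (sg @: D))) hmu.
have mu1_supp B : mu1 B <> None -> B \subset sg @: D.
  move=> mB; apply/subsetP => e eB; apply: contra_notT mB => eD.
  by apply: (s_loops e) => //; rewrite mem_enum inE.
exists r1, (pullback mu1 D sg a); split; first exact: pullback_valuated.
move=> y y_nz; rewrite pullback_closure //; split.
- move=> [_ [x [x_cl [c yc]]]]; pose z e := if e \in sg @: D then x e else None.
  have xz : mono_act D sg a x =1 mono_act D sg a z.
    by move=> i; rewrite /mono_act /z; case: ifP => // iD; rewrite imset_f.
  have z_nz : tnonzero z.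
    have [i] := y_nz; rewrite yc mxvE xz /mono_act; case: ifP => // iD yi.
    by exists (sg i) => zi; apply: yi; rewrite zi !tadd_None_r.
  exists z; last by exists c => i; rewrite yc mxvE xz.
  apply/(mu1_cl z z_nz); split; first by move=> e; rewrite mem_enum inE /z => /negbTE ->.
  by exists x; split => // e; rewrite mem_enum inE negbK /z => ->.
- move=> [z z_cl [c yc]]; have [_ [x [x_cl xz]]] := (mu1_cl z z_cl.1).1 z_cl.
  split => //; exists x; split => //; exists c => i; rewrite yc mxvE /mono_act.
  by case: ifP => // iD; rewrite xz // mem_enum inE negbK imset_f.
Qed.
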